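(* Let $T_9=\mathbf{e}^1_1\otimes(\mathbf{e}^2_1\otimes\mathbf{e}^3_1+\mathbf{e}^2_2\otimes\mathbf{e}^3_3)+\mathbf{e}^1_2\otimes(\mathbf{e}^2_1\otimes\mathbf{e}^3_2+\mathbf{e}^2_2\otimes\mathbf{e}^3_4)\in\mathbb{C}^2\otimes\mathbb{C}^2\otimes\mathbb{C}^4$ and let $f(\mathbf{x},\mathbf{y},\mathbf{z})=x_1y_1z_1+x_2y_1z_2+x_1y_2z_3+x_2y_2z_4$ for $\mathbf{x},\mathbf{y}\in\mathbb{C}^2,\mathbf{z}\in\mathbb{C}^4$. Let $T\in\mathbb{C}^2\otimes\mathbb{C}^2\otimes\mathbb{C}^4$ and $(A,B,C)\in\mathrm{GL}_2\times\mathrm{GL}_2\times\mathrm{GL}_4$ with $(A,B,C)\cdot T=T_9$. Then a rank-one tensor $\mathbf{a}\otimes\mathbf{b}\otimes\mathbf{c}$ lies in the forbidden locus of $T$ if and only if $f(A\mathbf{a},B\mathbf{b},C\mathbf{c})=0$ (equivalently $\langle (A^T\otimes B^T\otimes C^T)\cdot T_9^*,\mathbf{a}\otimes\mathbf{b}\otimes\mathbf{c}\rangle=0$, where $T_9^*$ is $T_9$ written in the dual basis).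
   Context: $\mathbf{e}^i_j$ denotes the $j$-th standard basis vector of the $i$-th factor. The group $\mathrm{GL}_{n_1}\times\mathrm{GL}_{n_2}\times\mathrm{GL}_{n_3}$ acts by $(A,B,C)\cdot(\mathbf{a}\otimes\mathbf{b}\otimes\mathbf{c})=A\mathbf{a}\otimes B\mathbf{b}\otimes C\mathbf{c}$, extended linearly. The rank of a tensor is the minimal number of rank-one tensors summing to it. A rank-one tensor $P$ is in the forbidden locus of $T$ if $\mathrm{rk}(T-\lambda P)\ge\mathrm{rk}(T)$ for all $\lambda\in\mathbb{C}$. (Here $\mathrm{rk}(T)=4$.) *)

(* The field of complex numbers is modelled as
   C := R[i] = complex R for an arbitrary R : realType (mathcomp-analysis
   reals; real closed), i.e. the complex numbers built from the reals. *)
From HB Require Import structures.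
From mathcomp Require Import all_boot all_order all_algebra.
From mathcomp Require Import boolp reals.
From mathcomp Require Import complex.
Set Implicit Arguments. Unset Strict Implicit. Unset Printing Implicit Defensive.
Import Order.TTheory GRing.Theory Num.Theory.
Local Open Scope ring_scope.

Definition tensor (K : Type) (n1 n2 n3 : nat) := 'I_n1 -> 'I_n2 -> 'I_n3 -> K.

Section Tensors.
Variables (K : fieldType) (n1 n2 n3 : nat).

Definition tprod (a : 'cV[K]_n1) (b : 'cV[K]_n2) (c : 'cV[K]_n3)
  : tensor K n1 n2 n3 := fun i j k => a i 0 * b j 0 * c k 0.

Definition is_rank_one (P : tensor K n1 n2 n3) : Prop :=
  exists a b c, (forall i j k, P i j k = tprod a b c i j k) /\
                exists i j k, P i j k != 0.

Definition rank_le (r : nat) (T : tensor K n1 n2 n3) : Prop :=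
  exists (a : 'I_r -> 'cV[K]_n1) (b : 'I_r -> 'cV[K]_n2) (c : 'I_r -> 'cV[K]_n3),
    forall i j k, T i j k = \sum_(l < r) tprod (a l) (b l) (c l) i j k.

Lemma rank_le_exists (T : tensor K n1 n2 n3) : exists r, `[< rank_le r T >].
Proof.
exists #|@predT ('I_n1 * 'I_n2 * 'I_n3)%type|; apply/asboolP.
pose e (l : 'I_#|@predT ('I_n1 * 'I_n2 * 'I_n3)%type|) : ('I_n1 * 'I_n2 * 'I_n3)%type := enum_val l.
exists (fun l => \col_(i < n1) ((i == (e l).1.1)%:R * T (e l).1.1 (e l).1.2 (e l).2)).
exists (fun l => \col_(j < n2) (j == (e l).1.2)%:R).
exists (fun l => \col_(k < n3) (k == (e l).2)%:R).
move=> i j k; rewrite /tprod.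
under eq_bigr => l _ do rewrite !mxE.
rewrite -(big_enum_val (A := predT) (fun p : ('I_n1 * 'I_n2 * 'I_n3)%type =>
  ((i == p.1.1)%:R * T p.1.1 p.1.2 p.2) * (j == p.1.2)%:R * (k == p.2)%:R)) /=.
rewrite (bigD1 (i, j, k)) //= !eqxx !mulr1 mul1r big1 ?addr0 // => -[[i' j'] k'] /=.
rewrite !xpair_eqE.
rewrite ![_ == i']eq_sym ![_ == j']eq_sym ![_ == k']eq_sym.
case: (i' == i) => /=; last by rewrite !mul0r.
case: (j' == j) => /=; last by rewrite mulr0 mul0r.
case: (k' == k) => /=; first by []. by rewrite mulr0.
Qed.

Definition trank (T : tensor K n1 n2 n3) : nat := ex_minn (rank_le_exists T).

Definition tsub (T P : tensor K n1 n2 n3) (l : K) : tensor K n1 n2 n3 :=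
  fun i j k => T i j k - l * P i j k.

Definition forbidden (T P : tensor K n1 n2 n3) : Prop :=
  is_rank_one P /\ forall l : K, (trank (tsub T P l) >= trank T)%N.

Definition tact (A : 'M[K]_n1) (B : 'M[K]_n2) (C : 'M[K]_n3)
  (T : tensor K n1 n2 n3) : tensor K n1 n2 n3 :=
  fun i j k => \sum_(i' < n1) \sum_(j' < n2) \sum_(k' < n3)
                 A i i' * B j j' * C k k' * T i' j' k'.
End Tensors.

(* T_9 = e1 (x) (e1 (x) e1 + e2 (x) e3) + e2 (x) (e1 (x) e2 + e2 (x) e4),
   with 0-based indices: nonzero (=1) exactly at (0,0,0),(0,1,2),(1,0,1),(1,1,3),
   i.e. when k = 2 j + i. *)
Definition T9 (K : fieldType) : tensor K 2 2 4 :=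
  fun i j k => if (k == (2 * j + i)%N :> nat) then 1 else 0.

Definition f9 (K : fieldType) (x : 'cV[K]_2) (y : 'cV[K]_2) (z : 'cV[K]_4) : K :=
  x 0 0 * y 0 0 * z 0 0 + x 1 0 * y 0 0 * z 1 0
  + x 0 0 * y 1 0 * z 2 0 + x 1 0 * y 1 0 * z 3 0.

From HB Require Import structures.
From mathcomp Require Import all_boot all_order all_algebra.
From mathcomp Require Import boolp reals complex ring.
Import Order.TTheory GRing.Theory Num.Theory.
Local Open Scope ring_scope.
Set Implicit Arguments. Unset Strict Implicit.

(* The action of GL_2 x GL_2 x GL_4 preserves rank, so T may be replaced by T9
   and a (x) b (x) c by x (x) y (x) z with x = A a, y = B b, z = C c.
   Flattening T9 - l x (x) y (x) z along the third factor gives 1 - l z w with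
   w = x (x) y, and w z = f(x, y, z).  If l f = 0 the matrix l z w is square-zero,
   so the flattening is invertible and the rank stays at least 4 = rk T9.  If
   f <> 0, then for l = 1 / f all slices lie in a hyperplane of 2 x 2 matrices
   spanned by three rank-one matrices, so the rank drops to 3. *)

Section TensorAction.
Variables (K : fieldType) (n1 n2 n3 : nat).
Implicit Types (X Y : tensor K n1 n2 n3) (A : 'M[K]_n1) (B : 'M[K]_n2) (C : 'M[K]_n3).

Lemma tensorP X Y : (forall i j k, X i j k = Y i j k) -> X = Y.
Proof. by move=> E; apply/funext => i; apply/funext => j; apply/funext => k. Qed.

Lemma rank_le_trank X : rank_le (trank X) X.
Proof. by rewrite /trank; case: ex_minnP => m /asboolP. Qed.

Lemma trank_min r X : rank_le r X -> (trank X <= r)%N.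
Proof. by rewrite /trank; case: ex_minnP => m _ min_m /asboolP; apply: min_m. Qed.

Lemma tact_tprod A B C a b c :
  tact A B C (tprod a b c) = tprod (A *m a) (B *m b) (C *m c).
Proof.
apply/tensorP => i j k; rewrite /tact /tprod !mxE [in RHS]big_distrl [in RHS]big_distrl /=.
apply: eq_bigr => i' _; rewrite [X in X * _]mulr_sumr mulr_suml.
apply: eq_bigr => j' _; rewrite mulr_sumr.
by apply: eq_bigr => k' _; ring.
Qed.

Lemma tact_sum r A B C (P : 'I_r -> tensor K n1 n2 n3) :
  tact A B C (fun i j k => \sum_l P l i j k) =
  (fun i j k => \sum_l tact A B C (P l) i j k).
Proof.
apply/tensorP => i j k; rewrite /tact [RHS]exchange_big; apply: eq_bigr => i' _.
rewrite [RHS]exchange_big; apply: eq_bigr => j' _.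
by rewrite [RHS]exchange_big; apply: eq_bigr => k' _; rewrite mulr_sumr.
Qed.

Lemma tact_tsub A B C X Y l :
  tact A B C (tsub X Y l) = tsub (tact A B C X) (tact A B C Y) l.
Proof.
apply/tensorP => i j k; rewrite /tact /tsub mulr_sumr -sumrB; apply: eq_bigr => i' _.
rewrite mulr_sumr -sumrB; apply: eq_bigr => j' _.
by rewrite mulr_sumr -sumrB; apply: eq_bigr => k' _; ring.
Qed.

Lemma tact_sum_tprod r A B C (a : 'I_r -> 'cV_n1) b c :
  tact A B C (fun i j k => \sum_l tprod (a l) (b l) (c l) i j k) =
  (fun i j k => \sum_l tprod (A *m a l) (B *m b l) (C *m c l) i j k).
Proof.
rewrite (tact_sum _ _ _ (fun l => tprod (a l) (b l) (c l))).
by apply/tensorP => i j k; apply: eq_bigr => l _; rewrite tact_tprod.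
Qed.

Lemma rank_le_tact r A B C X : rank_le r X -> rank_le r (tact A B C X).
Proof.
case=> a [b [c /tensorP->]]; rewrite tact_sum_tprod.
by exists (fun l => A *m a l), (fun l => B *m b l), (fun l => C *m c l).
Qed.

Lemma tact_comp A B C A' B' C' X :
  tact A' B' C' (tact A B C X) = tact (A' *m A) (B' *m B) (C' *m C) X.
Proof.
have [r /asboolP [a [b [c /tensorP->]]]] := rank_le_exists X.
by rewrite !tact_sum_tprod; apply/tensorP => i j k; under eq_bigr do rewrite !mulmxA.
Qed.

Lemma tact1 X : tact 1%:M 1%:M 1%:M X = X.
Proof.
have [r /asboolP [a [b [c /tensorP->]]]] := rank_le_exists X.
by rewrite tact_sum_tprod; apply/tensorP => i j k; under eq_bigr do rewrite !mul1mx.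
Qed.

Lemma trank_tact A B C X : A \in unitmx -> B \in unitmx -> C \in unitmx ->
  trank (tact A B C X) = trank X.
Proof.
move=> uA uB uC; apply/eqP; rewrite eqn_leq.
rewrite (trank_min (rank_le_tact A B C (rank_le_trank X))) /=.
apply: trank_min; have := rank_le_tact (invmx A) (invmx B) (invmx C)
  (rank_le_trank (tact A B C X)).
by rewrite tact_comp !mulVmx // tact1.
Qed.

Lemma tsub0 X Y : tsub X Y 0 = X.
Proof. by apply/tensorP => i j k; rewrite /tsub mul0r subr0. Qed.

End TensorAction.

Section Flattening.
Variables (K : fieldType) (n1 n2 n3 m : nat) (g : 'I_m -> 'I_n1 * 'I_n2).

Definition flattening (X : tensor K n1 n2 n3) : 'M[K]_(n3, m) :=
  \matrix_(k, p) X (g p).1 (g p).2 k.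

Lemma mxrank_flattening r X : rank_le r X -> (\rank (flattening X) <= r)%N.
Proof.
case=> a [b [c E]].
have -> : flattening X = \matrix_(k, l) c l k 0 *m
                         \matrix_(l, p) (a l (g p).1 0 * b l (g p).2 0).
  apply/matrixP => k p; rewrite !mxE E; apply: eq_bigr => l _; rewrite !mxE /tprod; ring.
exact: mulmx_max_rank.
Qed.

Lemma flattening_tsub_tprod X a b c l :
  flattening (tsub X (tprod a b c) l) =
  flattening X - (l *: c) *m \row_p (a (g p).1 0 * b (g p).2 0).
Proof.
by apply/matrixP => k p; rewrite !mxE big_ord1 !mxE /tsub /tprod; congr (_ - _); ring.
Qed.

End Flattening.

Lemma unitmx_1_sub_nilpotent (K : fieldType) n (N : 'M[K]_n) :
  N *m N = 0 -> 1%:M - N \in unitmx.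
Proof.
move=> NN0; have [] // := @mulmx1_unit _ _ (1%:M - N) (1%:M + N).
by rewrite mulmxBl !mulmxDr !mul1mx mulmx1 NN0 addr0 addrK.
Qed.

Section T9.
Variable K : fieldType.

Definition pair4 (p : 'I_4) : 'I_2 * 'I_2 := (inord (p %% 2), inord (p %/ 2)).

Lemma pair4E :
  [/\ pair4 0 = (0, 0), pair4 1 = (1, 0), pair4 2 = (0, 1) & pair4 3 = (1, 1)].
Proof. by split; congr pair; apply/val_inj; rewrite /= inordK. Qed.

Lemma ord2E (i : 'I_2) : i = 0 \/ i = 1.
Proof. case: i => [[|[|?]] Hi]; [left|right|by []]; exact/val_inj. Qed.

Lemma ord4E (p : 'I_4) : [\/ p = 0, p = 1, p = 2 | p = 3].
Proof.
case: p => [[|[|[|[|?]]]] Hp]; [apply: Or41|apply: Or42|apply: Or43|apply: Or44|by []];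
exact/val_inj.
Qed.

Lemma sum4 (F : 'I_4 -> K) : \sum_p F p = F 0 + F 1 + F 2 + F 3.
Proof.
rewrite !big_ord_recr big_ord0 /= add0r.
by congr (F _ + F _ + F _ + F _); apply/val_inj.
Qed.

Definition col2 (p q : K) : 'cV[K]_2 := \col_i (if i == 0 then p else q).

Lemma sum3 (F : 'I_3 -> K) : \sum_l F l = F 0 + F 1 + F 2.
Proof.
rewrite !big_ord_recr big_ord0 /= add0r.
by congr (F _ + F _ + F _); apply/val_inj.
Qed.

Lemma flattening_T9 : flattening pair4 (T9 K) = 1%:M.
Proof.
have [e0 e1 e2 e3] := pair4E; apply/matrixP => k p; rewrite !mxE /T9.
by case: (ord4E p) => ->; rewrite ?e0 ?e1 ?e2 ?e3; case: (ord4E k) => ->.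
Qed.

Lemma rank_le_T9 : rank_le 4 (T9 K).
Proof.
exists (fun p => delta_mx (pair4 p).1 0), (fun p => delta_mx (pair4 p).2 0),
       (fun p => delta_mx p 0) => i j k.
have [e0 e1 e2 e3] := pair4E; rewrite sum4 /tprod !mxE ?e0 ?e1 ?e2 ?e3 /T9 /=.
by case: (ord2E i) => ->; case: (ord2E j) => ->; case: (ord4E k) => -> /=; ring.
Qed.

Section RankOnePerturbation.
Variables (x y : 'cV[K]_2) (z : 'cV[K]_4).

Lemma mulmx_row_pair4 :
  \row_p (x (pair4 p).1 0 * y (pair4 p).2 0) *m z = (f9 x y z)%:M.
Proof.
apply/matrixP => i j; rewrite !ord1 !mxE sum4 !mxE /f9.
by case: pair4E => -> -> -> -> /=; ring.
Qed.

Lemma trank_T9_sub_ge l :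
  l * f9 x y z = 0 -> (4 <= trank (tsub (T9 K) (tprod x y z) l))%N.
Proof.
move=> lf0.
have unit_flat : flattening pair4 (tsub (T9 K) (tprod x y z) l) \in unitmx.
  rewrite flattening_tsub_tprod flattening_T9 unitmx_1_sub_nilpotent //.
  rewrite mulmxA -[X in X *m _]mulmxA -scalemxAr mulmx_row_pair4.
  by rewrite scale_scalar_mx mul_mx_scalar lf0 scale0r mul0mx.
have := mxrank_flattening pair4 (rank_le_trank (tsub (T9 K) (tprod x y z) l)).
by rewrite mxrank_unit.
Qed.

Section RankThreeDecomposition.
(* With Z := [[z0, z2], [z1, z3]] we have f = x^T Z y.  The vectors u and v are
   Z y and Z^T x rotated by a quarter turn, so u^T Z y = x^T Z v = 0, and
   t = u^T Z v / f.  Hence x v^T, u y^T and (x + u) (v - t y)^T are rank-one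
   matrices in the hyperplane {M | <Z, M> = 0}, which contains every slice
   T9(., ., k) - z_k / f * x y^T; c3 gives the coordinates of the slices in
   this basis. *)
Let x0 := x 0 0. Let x1 := x 1 0. Let y0 := y 0 0. Let y1 := y 1 0.
Let z0 := z 0 0. Let z1 := z 1 0. Let z2 := z 2 0. Let z3 := z 3 0.
Let f := f9 x y z.
Let u0 := - (z1 * y0 + z3 * y1). Let u1 := z0 * y0 + z2 * y1.
Let v0 := - (z2 * x0 + z3 * x1). Let v1 := z0 * x0 + z1 * x1.
Let t := (u0 * (z0 * v0 + z2 * v1) + u1 * (z1 * v0 + z3 * v1)) / f.
Let xp (i : 'I_2) := if i == 0 then - x1 else x0.
Let yp (i : 'I_2) := if i == 0 then - y1 else y0.
Let up (i : 'I_2) := if i == 0 then u1 else - u0.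
Let vp (i : 'I_2) := if i == 0 then v1 else - v0.
Let coef (p q : 'I_2 -> K) (k : 'I_4) := p (pair4 k).1 * q (pair4 k).2 / (f * f).
Let a3 (l : 'I_3) := if l == 0 then x else if l == 1 then col2 u0 u1
                     else col2 (x0 + u0) (x1 + u1).
Let b3 (l : 'I_3) := if l == 0 then col2 v0 v1 else if l == 1 then y
                     else col2 (v0 - t * y0) (v1 - t * y1).
Let c3 (l : 'I_3) : 'cV[K]_4 := \col_k
  (if l == 0 then coef up yp k - coef xp yp k
   else if l == 1 then coef xp vp k + coef xp yp k * t else coef xp yp k).

Lemma rank_le_T9_sub_inv : f != 0 -> rank_le 3 (tsub (T9 K) (tprod x y z) f^-1).
Proof.
move=> f_neq0; exists a3, b3, c3 => i j k.
have [e0 e1 e2 e3] := pair4E.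
rewrite sum3 /tsub /tprod /a3 /b3 /c3 /col2 /coef !mxE /xp /yp /up /vp.
case: (ord2E i) => ->; case: (ord2E j) => ->; case: (ord4E k) => ->;
  rewrite ?e0 ?e1 ?e2 ?e3 /T9 /=.
all: move: f_neq0; rewrite /t /f /f9 /u0 /u1 /v0 /v1 /x0 /x1 /y0 /y1 /z0 /z1 /z2 /z3.
all: by move=> f_neq0; field.
Qed.

End RankThreeDecomposition.
End RankOnePerturbation.
End T9.

Lemma trank_T9 (K : fieldType) : trank (T9 K) = 4%N.
Proof.
apply/eqP; rewrite eqn_leq (trank_min (@rank_le_T9 K)) /=.
by rewrite -(tsub0 (T9 K) (tprod 0 0 0)) trank_T9_sub_ge ?mul0r.
Qed.

Unset Implicit Arguments.

Theorem proposition5p1 (R : realType) (T : tensor R[i] 2 2 4)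
  (A : 'M[R[i]]_2) (B : 'M[R[i]]_2) (C : 'M[R[i]]_4) :
  A \in unitmx -> B \in unitmx -> C \in unitmx ->
  (forall i j k, tact A B C T i j k = T9 R[i] i j k) ->
  forall (a : 'cV[R[i]]_2) (b : 'cV[R[i]]_2) (c : 'cV[R[i]]_4),
    is_rank_one (tprod a b c) ->
    (forbidden T (tprod a b c) <-> f9 (A *m a) (B *m b) (C *m c) = 0).
Proof.
move=> uA uB uC /tensorP ATB a b c rank_one_abc.
set x := A *m a; set y := B *m b; set z := C *m c.
have trank_sub l :
    trank (tsub T (tprod a b c) l) = trank (tsub (T9 _) (tprod x y z) l).
  by rewrite -(trank_tact _ uA uB uC) tact_tsub ATB tact_tprod.
have trank_T : trank T = 4%N by rewrite -(trank_tact _ uA uB uC) ATB trank_T9.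
split=> [[_ forbidden_abc] | f0].
  apply/eqP; apply: contraT => f_neq0.
  have := forbidden_abc (f9 x y z)^-1; rewrite trank_sub trank_T => ge4.
  by have := leq_trans ge4 (trank_min (rank_le_T9_sub_inv f_neq0)).
split=> // l; rewrite trank_sub trank_T.
by apply: trank_T9_sub_ge; rewrite f0 mulr0.
Qed.
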